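(* For integers $N\ge 1$ and $n\ge 1$, $$B_{N,n}=(-1)^n\,n!\,\det\big(c_{ij}\big)_{1\le i,j\le n},$$ where $c_{ij}=\dfrac{N!}{(N+i-j+1)!}$ if $j\le i$, $c_{ij}=1$ if $j=i+1$, and $c_{ij}=0$ if $j>i+1$. That is, the matrix has $\frac{N!}{(N+1)!}$ on the diagonal, $1$ on the superdiagonal, zeros above the superdiagonal, and $\frac{N!}{(N+k+1)!}$ on the $k$-th subdiagonal.
   Context: For a positive integer $N$, the hypergeometric Bernoulli numbers $B_{N,n}$ ($n\ge 0$) are defined by $$\frac{x^N/N!}{e^x-\sum_{n=0}^{N-1}x^n/n!}=\sum_{n=0}^\infty B_{N,n}\frac{x^n}{n!}.$$ *)

(* Formal power series over a field of characteristic 0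
   (here: any numFieldType R) are represented by their coefficient sequences
   nat -> R, multiplied by the Cauchy product. *)
From HB Require Import structures.
From mathcomp Require Import all_boot all_order all_algebra.
Set Implicit Arguments. Unset Strict Implicit. Unset Printing Implicit Defensive.
Import Order.TTheory GRing.Theory Num.Theory.
Local Open Scope ring_scope.

Definition fps_mul {R : numFieldType} (a b : nat -> R) (m : nat) : R :=
  \sum_(i < m.+1) a i * b (m - i)%N.

Definition hb_num {R : numFieldType} (N : nat) (k : nat) : R :=
  if k == N then (N`!%:R)^-1 else 0.

(* Coefficients of e^x - sum_{n=0}^{N-1} x^n/n! *)
Definition hb_den {R : numFieldType} (N : nat) (k : nat) : R :=
  (k`!%:R)^-1 - (if (k < N)%N then (k`!%:R)^-1 else 0).

(* B is the sequence of hypergeometric Bernoulli numbers B_{N,n}: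
   the identity of formal power series
     (x^N/N!) / (e^x - sum_{n<N} x^n/n!) = sum_n B n x^n/n!,
   i.e. (since the denominator divides the numerator in the ring of formal
   power series, and the quotient is unique)
     x^N/N! = (e^x - sum_{n<N} x^n/n!) * sum_n B n x^n/n!. *)
Definition is_hyperBernoulli {R : numFieldType} (N : nat) (B : nat -> R) : Prop :=
  forall m : nat, hb_num N m = fps_mul (hb_den N) (fun n => B n / (n`!%:R)) m.

(* The n x n matrix (c_ij), with 0-based indices i j : 'I_n
   (the entries only depend on i - j, so the shift is harmless). *)
Definition hb_matrix {R : numFieldType} (N n : nat) : 'M[R]_n :=
  \matrix_(i < n, j < n)
    if (j <= i)%N then N`!%:R / (N + i - j + 1)`!%:R
    else if j == i.+1 :> nat then 1 else 0.

(* Since e^x - sum_{n<N} x^n/n! = x^N sum_k x^k/(N+k)!, the defining identity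
   says that b_k = B_{N,k}/k! is the power series inverse of a_k = N!/(N+k)!.
   Hence the lower triangular Toeplitz matrices of a and b are mutually
   inverse; as a_0 = 1 the first has determinant 1, so its inverse is its
   adjugate, and the corner entry b_n is the cofactor (-1)^n times the minor
   without the first row and last column, which is the Hessenberg matrix
   of the statement. *)
From HB Require Import structures.
From mathcomp Require Import all_boot all_order all_algebra.
From mathcomp Require Import zify.
Import Order.TTheory GRing.Theory Num.Theory.
Local Open Scope ring_scope.

Section LowerToeplitz.
Context {R : comPzRingType}.

Definition lower_toeplitz n (c : nat -> R) : 'M[R]_n :=
  \matrix_(i, j) if (j <= i)%N then c (i - j)%N else 0.

Lemma lower_toeplitz_mul n (a b : nat -> R) :
  lower_toeplitz n a *m lower_toeplitz n b =
  lower_toeplitz n (fun k => \sum_(t < k.+1) a t * b (k - t)%N).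
Proof.
apply/matrixP => i j; rewrite !mxE.
pose G l := a (i - l)%N * b (l - j)%N.
have -> : \sum_(l < n) lower_toeplitz n a i l * lower_toeplitz n b l j =
          \sum_(j <= l < i.+1) G l.
  rewrite (big_nat_widen _ _ n) ?ltn_ord // big_geq_mkord [RHS]big_mkcond /=.
  apply: eq_bigr => l _; rewrite !mxE ltnS.
  by case: (l <= i)%N; case: (j <= l)%N; rewrite ?mulr0 ?mul0r.
case: leqP => [le_ji | lt_ij]; last by rewrite big_geq //; lia.
rewrite big_rev_mkord subSn //; apply: eq_bigr => t _.
by rewrite /G; congr (a _ * b _); have := ltn_ord t; lia.
Qed.

Lemma lower_toeplitz_delta n :
  lower_toeplitz n (fun k => (k == 0%N)%:R) = 1%:M.
Proof.
apply/matrixP => i j; rewrite !mxE subn_eq0 -val_eqE eqn_leq andbC.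
by case: leqP.
Qed.

Lemma det_lower_toeplitz n (c : nat -> R) :
  \det (lower_toeplitz n c) = c 0%N ^+ n.
Proof.
rewrite det_trig; last by apply/is_trig_mxP => i j lt_ij; rewrite mxE leqNgt lt_ij.
by rewrite (eq_bigr (fun=> c 0%N)) ?prodr_const ?card_ord // => i _; rewrite mxE leqnn subnn.
Qed.

Lemma series_inverse_coef_det (a b : nat -> R) n :
  a 0%N = 1 ->
  (forall k, \sum_(t < k.+1) a t * b (k - t)%N = (k == 0%N)%:R) ->
  b n = (-1) ^+ n * \det (row' ord0 (col' ord_max (lower_toeplitz n.+1 a))).
Proof.
move=> a0 ab_delta; set A := lower_toeplitz n.+1 a.
have A_inv : A *m lower_toeplitz n.+1 b = 1%:M.
  apply/matrixP => i j.
  by rewrite lower_toeplitz_mul -lower_toeplitz_delta !mxE ab_delta.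
have adjA : \adj A = lower_toeplitz n.+1 b.
  rewrite -[\adj A]mulmx1 -A_inv mulmxA mul_adj_mx.
  by rewrite det_lower_toeplitz a0 expr1n mul1mx.
have := congr1 (fun M : 'M[R]_n.+1 => M ord_max ord0) adjA.
by rewrite /= !mxE subn0 /cofactor add0n.
Qed.

End LowerToeplitz.

Lemma natr_fact_neq0 (R : numFieldType) k : (k`!%:R : R) != 0.
Proof. by rewrite pnatr_eq0 -lt0n fact_gt0. Qed.

Lemma hyperBernoulli_series_inverse {R : numFieldType} {N} {B : nat -> R} :
  is_hyperBernoulli N B -> forall k,
  \sum_(t < k.+1) N`!%:R / (N + t)`!%:R * (B (k - t)%N / (k - t)`!%:R) =
  (k == 0%N)%:R.
Proof.
move=> hbB k; move: (hbB (N + k)%N); rewrite /hb_num /fps_mul -addnS big_split_ord /=.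
rewrite big1 ?add0r => [|i _]; last first.
  by rewrite /hb_den ltn_ord subrr mul0r.
rewrite -[X in _ == X]addn0 eqn_add2l => hb_coef.
rewrite (eq_bigr (fun t : 'I_k.+1 => N`!%:R *
  (hb_den N (N + t) * (B (N + k - (N + t))%N / (N + k - (N + t))`!%:R)))).
  rewrite -mulr_sumr -hb_coef; case: eqP => _; last exact: mulr0.
  exact: divff (natr_fact_neq0 _ _).
by move=> t _; rewrite subnDl /hb_den ltnNge leq_addr subr0 mulrA.
Qed.

Lemma hb_matrix_minor (R : numFieldType) N n :
  row' ord0 (col' ord_max (lower_toeplitz n.+1 (fun k => N`!%:R / (N + k)`!%:R))) =
  hb_matrix N n :> 'M[R]_n.
Proof.
apply/matrixP => i j; rewrite !mxE lift0 lift_max /=.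
case: (ltngtP j i.+1) => [lt_ji | gt_ji | ->].
- have le_ji : (j <= i)%N by rewrite -ltnS.
  by rewrite le_ji; congr (_ / _%:R); congr _`!; lia.
- by rewrite ifN //; lia.
- by rewrite ltnn subnn addn0 divff ?natr_fact_neq0.
Qed.

Theorem theorem1 (R : numFieldType) (N n : nat) (B : nat -> R) :
  (1 <= N)%N -> (1 <= n)%N -> is_hyperBernoulli N B ->
  B n = (-1) ^+ n * n`!%:R * \det (@hb_matrix R N n).
Proof.
move=> _ _ hbB.
have a0 : N`!%:R / (N + 0)`!%:R = 1 :> R by rewrite addn0 divff ?natr_fact_neq0.
have := series_inverse_coef_det (fun k => N`!%:R / (N + k)`!%:R)
  (fun k => B k / k`!%:R) n a0
  (hyperBernoulli_series_inverse hbB).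
rewrite hb_matrix_minor => coef_n.
by rewrite -[B n](divfK (natr_fact_neq0 R n)) coef_n mulrAC.
Qed.
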